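(* Let $\mathscr{X}$ be a finite nonempty set of possible samples, and identify a dataset with its vector of multiplicities $\mathcal{D}\in\mathbb{N}^{|\mathscr{X}|}$, so that $\|\mathcal{D}\|_1$ is its number of samples and $\|\mathcal{D}-\mathcal{D}'\|_1$ is the distance between two datasets. Let $\Lambda\in\mathbb{N}^*$ be a minimum support, let $\beta>0$, and let $\mathcal{D}\in\mathbb{N}^{|\mathscr{X}|}$ with $\|\mathcal{D}\|_1\ge \Lambda$. Define $$g:\mathbb{R}^+\to[0,1],\qquad g(x)=1-\Big(\frac{x}{x+1}\Big)^2-\Big(\frac{1}{x+1}\Big)^2,$$ and $$\xi_{\mathcal{D},\beta}:\mathbb{N}\to\mathbb{R}^+,\qquad \xi_{\mathcal{D},\beta}(k)=e^{-k\beta}\, g\big(\max(\Lambda,\|\mathcal{D}\|_1-k)\big).$$ Let $t=\|\mathcal{D}\|_1-\dfrac{1-\beta-\sqrt{(1-\beta)^2-4\beta}}{2\beta}$ when this expression is well defined (i.e. $(1-\beta)^2-4\beta\ge 0$ and the resulting value is $\ge 0$), and $t=0$ otherwise. Then the smooth sensitivity of the Gini impurity at $\mathcal{D}$ (as defined in the context) satisfies $$S^*_{\mathcal{G},\beta}(\mathcal{D})=\max\Big[\xi_{\mathcal{D},\beta}(0),\ \xi_{\mathcal{D},\beta}(\lfloor t\rfloor),\ \xi_{\mathcal{D},\beta}(\lceil t\rceil),\ \xi_{\mathcal{D},\beta}(\|\mathcal{D}\|_1-\Lambda)\Big].$$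
   Context: Setting: binary classification with a rule being evaluated on the dataset $\mathcal{D}$ of samples remaining to be classified. The local sensitivity of the Gini impurity at a dataset $\mathcal{D}'$ is $LS_{\mathcal{G}}(\mathcal{D}')=g(\|\mathcal{D}'\|_1)$ with $g$ as in the claim. Given the minimum support $\Lambda$ (only datasets with at least $\Lambda$ samples are considered), define for $k\in\mathbb{N}$ $$\mathcal{T}_k(\mathcal{D})=\max\{LS_{\mathcal{G}}(\mathcal{D}') : \mathcal{D}'\in\mathbb{N}^{|\mathscr{X}|},\ \|\mathcal{D}'-\mathcal{D}\|_1\le k,\ \|\mathcal{D}'\|_1\ge\Lambda\},$$ and the smooth sensitivity of the Gini impurity as $S^*_{\mathcal{G},\beta}(\mathcal{D})=\max_{k\in\mathbb{N}} e^{-\beta k}\,\mathcal{T}_k(\mathcal{D})$. *)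

From mathcomp Require Import all_boot all_order all_algebra.
From mathcomp Require Import all_classical all_reals all_analysis.
Set Implicit Arguments. Unset Strict Implicit. Unset Printing Implicit Defensive.
Import Order.TTheory GRing.Theory Num.Theory.
Local Open Scope classical_set_scope.
Local Open Scope ring_scope.

Section GiniDefs.
Variables (R : realType) (T : finType).

(* A dataset is its vector of multiplicities D : T -> nat. *)
Definition dsize (D : T -> nat) : nat := (\sum_(x : T) D x)%N.

Definition ddist (D D' : T -> nat) : nat :=
  (\sum_(x : T) `|(D x)%:Z - (D' x)%:Z|)%N.

Definition gini_g (x : R) : R :=
  1 - (x / (x + 1)) ^+ 2 - (1 / (x + 1)) ^+ 2.

Definition LS_gini (D' : T -> nat) : R := gini_g (dsize D')%:R.

Definition Tk (Lambda : nat) (D : T -> nat) (k : nat) : R :=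
  sup [set LS_gini D' | D' in
        [set D' : T -> nat | (ddist D' D <= k)%N /\ (Lambda <= dsize D')%N]].

Definition smooth_sens (Lambda : nat) (beta : R) (D : T -> nat) : R :=
  sup [set expR (- beta * k%:R) * Tk Lambda D k | k in [set: nat]].

Definition xi (Lambda : nat) (beta : R) (D : T -> nat) (k : nat) : R :=
  expR (- (k%:R * beta)) *
    gini_g (Num.max (Lambda%:R) ((dsize D)%:R - k%:R)).

Definition t_crit (beta : R) (D : T -> nat) : R :=
  let disc := (1 - beta) ^+ 2 - 4 * beta in
  let t := (dsize D)%:R - (1 - beta - Num.sqrt disc) / (2 * beta) in
  if (0 <= disc) && (0 <= t) then t else 0.

End GiniDefs.

From mathcomp Require Import all_boot all_order all_algebra.
From mathcomp Require Import all_classical all_reals all_analysis.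
From mathcomp Require Import zify ring lra.
Import Order.TTheory GRing.Theory Num.Theory.
Local Open Scope classical_set_scope.
Local Open Scope ring_scope.

(* A dataset at distance at most k from D can have any size in
   [max(Lambda, |D| - k), |D| + k] and g is nonincreasing on [1, +oo), so
   T_k(D) = g(max(Lambda, |D| - k)) and the smooth sensitivity is sup_k xi(k).
   Beyond k = |D| - Lambda, xi only decreases.  Below it, log xi(k) is, up to
   a constant, y |-> beta y + ln y - 2 ln (y + 1) at y = |D| - k, whose
   derivative has the sign of the quadratic beta y^2 + (beta - 1) y + 1.  So
   this function increases, except between the two roots of the quadratic
   (when they exist), where it decreases; its maximum over the integers of
   [Lambda, |D|] is therefore attained at |D|, at Lambda, or at one of the two
   integers next to the smaller root, i.e. at k = floor t or k = ceil t. *)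

Section Datasets.
Context {T : finType}.

Lemma dsize_le_ddist (D D' : T -> nat) : (dsize D <= dsize D' + ddist D' D)%N.
Proof. by rewrite /dsize /ddist -big_split /=; apply: leq_sum => x _; lia. Qed.

Lemma ddist_dominated (D D' : T -> nat) : (forall x, D' x <= D x)%N ->
  ddist D' D = (dsize D - dsize D')%N.
Proof.
move=> D'_le; suff : (ddist D' D + dsize D')%N = dsize D by lia.
rewrite /ddist /dsize -big_split /=; apply: eq_bigr => x _.
by have := D'_le x; lia.
Qed.

Lemma exists_dominated_dsize_pred (D : T -> nat) : (0 < dsize D)%N ->
  exists2 D' : T -> nat, (forall x, D' x <= D x)%N & dsize D' = (dsize D).-1.
Proof.
move=> D_gt0; have [x0 Dx0_gt0] : exists x0, (0 < D x0)%N.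
  apply/existsP; apply: contraTT D_gt0; rewrite negb_exists => /forallP D0.
  by rewrite /dsize big1 // => x _; have := D0 x; lia.
exists (fun x => if x == x0 then (D x0).-1 else D x).
  by move=> x; case: eqP => [->|]; rewrite ?leq_pred.
rewrite /dsize (bigD1 x0) //= eqxx [in RHS](bigD1 x0) //=.
by rewrite (eq_bigr D) => [|x /negbTE ->]; first lia.
Qed.

Lemma exists_dominated_dsize (D : T -> nat) (j : nat) : (j <= dsize D)%N ->
  exists2 D' : T -> nat, (forall x, D' x <= D x)%N & dsize D' = (dsize D - j)%N.
Proof.
elim: j => [|j IHj] j_le; first by exists D; rewrite ?subn0.
have [D1 D1_le D1_size] := IHj (ltnW j_le).
have [|D2 D2_le D2_size] := exists_dominated_dsize_pred D1; first lia.
by exists D2; [move=> x; apply: leq_trans (D1_le x) | lia].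
Qed.

End Datasets.

Lemma sup_max_elt {R : realType} (E : set R) (x : R) :
  E x -> ubound E x -> sup E = x.
Proof.
move=> Ex ubx; apply/le_anti/andP; split; first by apply: ge_sup => //; exists x.
by apply: ub_le_sup => //; exists x.
Qed.

Lemma in_set_max {R : realDomainType} (E : set R) (x y : R) :
  E x -> E y -> E (Num.max x y).
Proof. by case: leP. Qed.

Lemma natr_maxn_subn {R : realDomainType} (a n k : nat) :
  (maxn a (n - k))%:R = Num.max (a%:R : R) (n%:R - k%:R).
Proof.
have [kn|nk] := leqP k n; last first.
  rewrite (_ : n - k = 0)%N ?maxn0; last lia.
  by rewrite max_l // lerBlDr -natrD ler_nat; lia.
have [an|na] := leqP a (n - k).
  by rewrite natrB // max_r // -natrB // ler_nat.
by rewrite max_l // -natrB // ler_nat ltnW.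
Qed.

Lemma leq_abs_floor {R : archiRealFieldType} (x : R) (m : nat) : 0 <= x ->
  (m <= `|Num.floor x|)%N = (m%:R <= x).
Proof. by move=> x_ge0; rewrite -lez_nat gez0_abs ?floor_ge0 // floor_ge_int. Qed.

Lemma abs_ceil_leq {R : archiRealFieldType} (x : R) (m : nat) : 0 <= x ->
  (`|Num.ceil x| <= m)%N = (x <= m%:R).
Proof.
by move=> x_ge0; rewrite -lez_nat gez0_abs ?ceil_ge0 ?ceil_le_int //; lra.
Qed.

Section Gini.
Context {R : realType}.

Lemma gini_gE (x : R) : 0 <= x -> gini_g x = 2 * x / (x + 1) ^+ 2.
Proof.
move=> x_ge0; have x1_neq0 : x + 1 != 0 by rewrite gt_eqF // ltr_wpDl.
by rewrite /gini_g; field.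
Qed.

Lemma gini_g_ge0 (x : R) : 0 <= x -> 0 <= gini_g x.
Proof. by move=> x_ge0; rewrite gini_gE // divr_ge0 ?sqr_ge0 //; lra. Qed.

Lemma gini_g_nincr (x y : R) : 1 <= x -> x <= y -> gini_g y <= gini_g x.
Proof.
move=> x_ge1 xy; rewrite !gini_gE; try lra.
rewrite ler_pdivrMr ?exprn_gt0 1?mulrAC ?ler_pdivlMr ?exprn_gt0; try lra.
(* 2x(y+1)^2 - 2y(x+1)^2 = 2(y - x)(xy - 1) *)
have : 0 <= (y - x) * (x * y - 1) by apply: mulr_ge0; nra.
nra.
Qed.

End Gini.

Lemma Tk_eq {R : realType} {T : finType} (Lambda : nat) (D : T -> nat) (k : nat) :
  (0 < Lambda)%N -> (Lambda <= dsize D)%N ->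
  Tk R Lambda D k = gini_g (maxn Lambda (dsize D - k))%:R.
Proof.
move=> Lambda_gt0 Lambda_le; apply: sup_max_elt.
  have [|D' D'_le D'_size] :=
    exists_dominated_dsize D (dsize D - maxn Lambda (dsize D - k)); first lia.
  exists D'; last by rewrite /LS_gini D'_size; congr (gini_g _%:R); lia.
  by split; rewrite ?ddist_dominated // D'_size; lia.
move=> _ [D' [D'_dist D'_size] <-]; rewrite /LS_gini; apply: gini_g_nincr.
  by rewrite ler1n; lia.
by rewrite ler_nat; have := dsize_le_ddist D D'; lia.
Qed.

Section LogProfile.
Context {R : realType}.
Implicit Types b y z : R.

Definition log_profile b y := b * y + ln y - 2 * ln (y + 1).

Definition profile_quad b y := b * y ^+ 2 + (b - 1) * y + 1.

Lemma expR_log_profile b y : 0 < y ->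
  expR (log_profile b y) = expR (b * y) * y / (y + 1) ^+ 2.
Proof.
move=> y_gt0; have y1_gt0 : 0 < y + 1 by lra.
by rewrite /log_profile mulr_natl mulr2n expRB !expRD !lnK ?posrE.
Qed.

Lemma is_derive_log_profile b {y} : 0 < y ->
  is_derive y 1 (log_profile b) (profile_quad b y / (y * (y + 1))).
Proof.
move=> y_gt0; have y1_gt0 : 0 < y + 1 by lra.
have d_lin : is_derive y 1 ( *%R b) b.
  by have := is_deriveZ b (@is_derive_id _ R y 1); rewrite /GRing.scale /= mulr1.
have d_ln1 : is_derive y 1 (fun z => 2 * ln (z + 1)) (2 * (y + 1)^-1).
  have d_ln1 : is_derive y 1 (@ln R \o shift 1) (y + 1)^-1.
    apply: is_derive_eq; first by apply: is_derive1_comp; apply: is_derive1_ln.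
    by rewrite addr0 mulr1.
  by have := is_deriveZ 2 d_ln1; rewrite /GRing.scale.
have -> : log_profile b = *%R b + @ln R - (fun z => 2 * ln (z + 1)).
  by apply/funext => z; rewrite /log_profile.
apply: is_derive_eq.
  exact: is_deriveB (is_deriveD d_lin (is_derive1_ln y_gt0)) d_ln1.
have y_neq0 : y != 0 by rewrite gt_eqF.
have y1_neq0 : y + 1 != 0 by rewrite gt_eqF.
by rewrite /profile_quad; field; apply/andP.
Qed.

Lemma log_profile_derivable b y : 0 < y -> derivable (log_profile b) y 1.
Proof. by move=> y_gt0; have [] := is_derive_log_profile b y_gt0. Qed.

Lemma derive1_log_profile b y : 0 < y ->
  derive1 (log_profile b) y = profile_quad b y / (y * (y + 1)).
Proof.
by move=> y_gt0; rewrite derive1E; have [_ ->] := is_derive_log_profile b y_gt0.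
Qed.

Lemma log_profile_continuous b a c : 0 < a ->
  {within `[a, c], continuous (log_profile b)}.
Proof.
move=> a_gt0; apply: derivable_within_continuous => z.
by rewrite in_itv /= => /andP[az _]; apply: log_profile_derivable; lra.
Qed.

Lemma log_profile_le b a c : 0 < a -> a <= c ->
  (forall z, a < z < c -> 0 <= profile_quad b z) ->
  log_profile b a <= log_profile b c.
Proof.
move=> a_gt0 ac q_ge0.
have cont := log_profile_continuous b a c a_gt0.
apply: (ger0_derive1_le_cc _ _ cont _ _ ac); rewrite ?bound_itvE //.
- by move=> z; rewrite in_itv /= => /andP[az _]; apply: log_profile_derivable; lra.
- move=> z; rewrite in_itv /= => z_in; rewrite derive1_log_profile; last lra.
  by rewrite divr_ge0 ?q_ge0 ?mulr_ge0 //; lra.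
Qed.

Lemma log_profile_ge b a c : 0 < a -> a <= c ->
  (forall z, a < z < c -> profile_quad b z <= 0) ->
  log_profile b c <= log_profile b a.
Proof.
move=> a_gt0 ac q_le0.
have cont := log_profile_continuous b a c a_gt0.
apply: (ler0_derive1_le_cc _ _ cont _ _ ac); rewrite ?bound_itvE //.
- by move=> z; rewrite in_itv /= => /andP[az _]; apply: log_profile_derivable; lra.
- move=> z; rewrite in_itv /= => z_in; rewrite derive1_log_profile; last lra.
  by rewrite mulr_le0_ge0 ?q_le0 // invr_ge0 mulr_ge0 //; lra.
Qed.

Definition crit_disc b := (1 - b) ^+ 2 - 4 * b.
Definition crit_lo b := (1 - b - Num.sqrt (crit_disc b)) / (2 * b).
Definition crit_hi b := (1 - b + Num.sqrt (crit_disc b)) / (2 * b).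

Lemma profile_quad_ge0 b z : 0 < b -> crit_disc b < 0 -> 0 <= profile_quad b z.
Proof.
move=> b_gt0 disc_lt0; rewrite -(pmulr_rge0 _ (_ : 0 < 4 * b)); last lra.
have -> : 4 * b * profile_quad b z = (2 * b * z + b - 1) ^+ 2 - crit_disc b.
  by rewrite /profile_quad /crit_disc; ring.
by have := sqr_ge0 (2 * b * z + b - 1); lra.
Qed.

Section Roots.
Variable b : R.
Hypotheses (b_gt0 : 0 < b) (disc_ge0 : 0 <= crit_disc b).

Lemma profile_quadE z :
  profile_quad b z = b * ((z - crit_lo b) * (z - crit_hi b)).
Proof.
have b_neq0 : b != 0 by rewrite gt_eqF.
have s2 := sqr_sqrtr disc_ge0; rewrite /crit_lo /crit_hi.
move: (Num.sqrt _) s2 => s s2.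
have -> : b * ((z - (1 - b - s) / (2 * b)) * (z - (1 - b + s) / (2 * b))) =
    b * z ^+ 2 + (b - 1) * z + ((1 - b) ^+ 2 - s ^+ 2) / (4 * b) by field.
by rewrite s2 /crit_disc /profile_quad; field.
Qed.

Lemma crit_lo_le_hi : crit_lo b <= crit_hi b.
Proof.
rewrite /crit_lo /crit_hi ler_pM2r ?invr_gt0 ?mulr_gt0 //.
by have := sqrtr_ge0 (crit_disc b); lra.
Qed.

Lemma profile_quad_ge0_out z : (z <= crit_lo b) || (crit_hi b <= z) ->
  0 <= profile_quad b z.
Proof.
have := crit_lo_le_hi; rewrite profile_quadE pmulr_rge0 // => lo_le_hi.
by case/orP => z_out; [apply: mulr_le0 | apply: mulr_ge0]; lra.
Qed.

Lemma profile_quad_le0_in z : crit_lo b <= z <= crit_hi b -> profile_quad b z <= 0.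
Proof.
by case/andP => lo_z z_hi; rewrite profile_quadE pmulr_rle0 // mulr_ge0_le0; lra.
Qed.

End Roots.

Lemma t_critE {T : finType} b (D : T -> nat) :
  0 <= crit_disc b -> 0 <= (dsize D)%:R - crit_lo b ->
  t_crit b D = (dsize D)%:R - crit_lo b.
Proof. by rewrite /t_crit /= => -> ->. Qed.

End LogProfile.

Section SmoothSensitivity.
Context {R : realType} {T : finType} (Lambda : nat) (b : R) (D : T -> nat).
Hypotheses (Lambda_gt0 : (0 < Lambda)%N) (b_gt0 : 0 < b)
  (Lambda_le_size : (Lambda <= dsize D)%N).

Local Notation N := ((dsize D)%:R : R).
Local Notation kf := `|Num.floor (t_crit b D)|%N.
Local Notation kc := `|Num.ceil (t_crit b D)|%N.

Lemma smooth_sensE : smooth_sens Lambda b D = sup (range (xi Lambda b D)).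
Proof.
rewrite /smooth_sens; congr sup; apply: eq_imagel => k _.
by rewrite Tk_eq // /xi natr_maxn_subn mulNr [k%:R * _]mulrC.
Qed.

Lemma Lambda_le_sub {k} : (k <= dsize D - Lambda)%N ->
  1 <= (Lambda%:R : R) <= N - k%:R.
Proof. by move=> k_le; rewrite ler1n Lambda_gt0 -natrB ?ler_nat //; lia. Qed.

Lemma xiE k : (k <= dsize D - Lambda)%N ->
  xi Lambda b D k = 2 * expR (- (N * b)) * expR (log_profile b (N - k%:R)).
Proof.
move=> /Lambda_le_sub/andP[Lambda_ge1 y_ge].
rewrite /xi (max_r y_ge) gini_gE ?expR_log_profile; try lra.
have -> : expR (- (k%:R * b)) = expR (- (N * b)) * expR (b * (N - k%:R)).
  by rewrite -expRD; congr expR; ring.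
by rewrite !mulrA [_ * 2]mulrC !mulrA.
Qed.

Lemma xi_le_of_profile k k' :
  (k <= dsize D - Lambda)%N -> (k' <= dsize D - Lambda)%N ->
  log_profile b (N - k%:R) <= log_profile b (N - k'%:R) ->
  xi Lambda b D k <= xi Lambda b D k'.
Proof.
by move=> k_le k'_le le_profile; rewrite !xiE // ler_wpM2l ?ler_expR.
Qed.

Lemma xi_le_tail k : (dsize D - Lambda <= k)%N ->
  xi Lambda b D k <= xi Lambda b D (dsize D - Lambda).
Proof.
move=> k_ge; rewrite /xi natrB // opprB addrCA subrr addr0 max_l; last first.
  by rewrite lerBlDr -natrD ler_nat; lia.
rewrite max_l // ler_wpM2r ?gini_g_ge0 ?ler0n //.
by rewrite ler_expR lerN2 ler_wpM2r ?(ltW b_gt0) // -natrB // ler_nat.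
Qed.

Lemma xi_le_xi0 k : (k <= dsize D - Lambda)%N ->
  (forall z, N - k%:R < z < N -> 0 <= profile_quad b z) ->
  xi Lambda b D k <= xi Lambda b D 0.
Proof.
move=> k_le q_ge0; have /andP[Lambda_ge1 y_ge] := Lambda_le_sub k_le.
apply: xi_le_of_profile => //; rewrite subr0 log_profile_le //; first lra.
by rewrite lerBlDr lerDl.
Qed.

Section CriticalPoint.
Hypotheses (disc_ge0 : 0 <= crit_disc b) (t_ge0 : 0 <= N - crit_lo b).

Lemma xi_le_xi_ceil k : (k <= dsize D - Lambda)%N -> t_crit b D <= k%:R ->
  xi Lambda b D k <= xi Lambda b D kc.
Proof.
move=> k_le t_le_k; have /andP[Lambda_ge1 y_ge] := Lambda_le_sub k_le.
have tcE : t_crit b D = N - crit_lo b by rewrite t_critE.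
have tc_ge0 : 0 <= t_crit b D by rewrite tcE.
have kc_le_k : (kc <= k)%N by rewrite abs_ceil_leq.
have t_le_kc : t_crit b D <= kc%:R by rewrite -abs_ceil_leq.
apply: xi_le_of_profile => //; first exact: leq_trans k_le.
rewrite log_profile_le ?lerB ?ler_nat //; first lra.
by move=> z /andP[_ z_lt]; rewrite profile_quad_ge0_out //; apply/orP; left; lra.
Qed.

Lemma xi_le_xi_floor_or_tail k : (k <= dsize D - Lambda)%N ->
  k%:R < t_crit b D -> N - k%:R <= crit_hi b ->
  xi Lambda b D k <= Num.max (xi Lambda b D kf) (xi Lambda b D (dsize D - Lambda)).
Proof.
move=> k_le k_lt_t y_le_hi; have /andP[Lambda_ge1 y_ge] := Lambda_le_sub k_le.
have tcE : t_crit b D = N - crit_lo b by rewrite t_critE.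
have tc_ge0 : 0 <= t_crit b D by rewrite tcE.
have k_le_kf : (k <= kf)%N by rewrite leq_abs_floor // ltW.
have kf_le_t : kf%:R <= t_crit b D by rewrite -leq_abs_floor.
have q_le0 z : crit_lo b <= z -> z <= crit_hi b -> profile_quad b z <= 0.
  by move=> lo_z z_hi; rewrite profile_quad_le0_in ?lo_z.
rewrite le_max; have [Lambda_le_lo|lo_lt_Lambda] := leP Lambda%:R (crit_lo b).
  have kf_le : (kf <= dsize D - Lambda)%N.
    have : (kf + Lambda)%:R <= N by rewrite natrD; lra.
    by rewrite ler_nat; lia.
  apply/orP; left; apply: xi_le_of_profile => //.
  rewrite log_profile_ge ?lerB ?ler_nat //; first lra.
  by move=> z /andP[z_gt z_lt]; apply: q_le0; lra.
apply/orP; right; apply: xi_le_of_profile => //.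
rewrite natrB // opprB addrCA subrr addr0.
by rewrite log_profile_ge //; [lra | move=> z /andP[z_gt z_lt]; apply: q_le0; lra].
Qed.

End CriticalPoint.

Lemma xi_le_candidates k :
  xi Lambda b D k <=
  Num.max (Num.max (xi Lambda b D 0) (xi Lambda b D kf))
          (Num.max (xi Lambda b D kc) (xi Lambda b D (dsize D - Lambda))).
Proof.
rewrite !le_max.
have [/xi_le_tail -> | k_lt] := leqP (dsize D - Lambda) k; first by rewrite !orbT.
have k_le := ltnW k_lt.
have [disc_lt0 | disc_ge0] := ltP (crit_disc b) 0.
  by rewrite xi_le_xi0 // => z _; apply: profile_quad_ge0.
have [t_lt0 | t_ge0] := ltP (N - crit_lo b) 0.
  rewrite xi_le_xi0 // => z /andP[_ z_lt].
  by rewrite profile_quad_ge0_out //; apply/orP; left; lra.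
have [t_le_k | k_lt_t] := leP (t_crit b D) k%:R.
  by rewrite xi_le_xi_ceil ?orbT.
have [hi_le_y | y_lt_hi] := leP (crit_hi b) (N - k%:R).
  rewrite xi_le_xi0 // => z /andP[z_gt _].
  by rewrite profile_quad_ge0_out //; apply/orP; right; lra.
have := xi_le_xi_floor_or_tail disc_ge0 t_ge0 k k_le k_lt_t (ltW y_lt_hi).
by rewrite le_max => /orP[] ->; rewrite ?orbT.
Qed.

End SmoothSensitivity.

Theorem theorem1 (R : realType) (T : finType) (Lambda : nat) (beta : R)
    (D : T -> nat) :
  (0 < #|T|)%N -> (0 < Lambda)%N -> 0 < beta -> (Lambda <= dsize D)%N ->
  smooth_sens Lambda beta D =
  Num.max (Num.max (xi Lambda beta D 0)
                   (xi Lambda beta D `|Num.floor (t_crit beta D)|%N))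
          (Num.max (xi Lambda beta D `|Num.ceil (t_crit beta D)|%N)
                   (xi Lambda beta D (dsize D - Lambda)%N)).
Proof.
(* Nonemptiness of T is implied by 0 < Lambda <= dsize D. *)
move=> _ Lambda_gt0 beta_gt0 Lambda_le_size.
rewrite smooth_sensE //; apply: sup_max_elt.
  by do 2 apply: in_set_max; exact: imageT.
by move=> _ [k _ <-]; apply: xi_le_candidates.
Qed.
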